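(* Let $A,B$ be systems of equal finite dimension $d$, each with observable $L=\sum_{n=0}^{d-1}n|n\rangle\langle n|$, and $L_{AB}=L\otimes\mathbb{I}+\mathbb{I}\otimes L$. Let $\rho_{AB}$ be a bipartite state with $[1,d-1]\cap\mathrm{modes}(\rho_{AB})=\emptyset$. Then there is no allowed operation that concentrates coherence, with respect to any coherence measure: for every allowed operation $\mathcal{E}$ on $AB$, the reduced states $\mathrm{tr}_B\mathcal{E}(\rho_{AB})$ and $\mathrm{tr}_A\mathcal{E}(\rho_{AB})$ are incoherent, i.e. commute with $L$.
   Context: For a bipartite operator $X$, its $j$th mode is $X^{(j)}:=\sum_c\Pi_{c+j}X\Pi_c$, with $\Pi_c$ the projector onto the eigenvalue-$c$ eigenspace of $L_{AB}$; $\mathrm{modes}(X):=\{j\in\mathbb{N}: X^{(j)}\neq0\}$. A state $\sigma$ of a system with observable $L$ is incoherent if $[\sigma,L]=0$. An allowed operation on $AB$ is a completely positive trace-preserving map $\mathcal{E}$ with $\mathcal{E}(e^{-iL_{AB}x}(\cdot)e^{iL_{AB}x})=e^{-iL_{AB}x}\mathcal{E}(\cdot)e^{iL_{AB}x}$ for all $x\in\mathbb{R}$. Any coherence measure considered vanishes on incoherent states. *)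

From HB Require Import structures.
From mathcomp Require Import all_boot all_order all_algebra.
From mathcomp Require Import reals trigo.
From mathcomp Require Import complex.

Unset Printing Implicit Defensive.

Import Order.TTheory GRing.Theory Num.Theory.
Local Open Scope ring_scope.

Section QDefs.
Context {R : realType}.
Local Notation C := (R[i]).

(* Operators on a finite-dimensional Hilbert space with orthonormal basis
   indexed by a finite type I, given by their matrix entries. *)
Definition op (I : finType) := I -> I -> C.

Definition op_mul {I : finType} (X Y : op I) : op I :=
  fun e f => \sum_(g : I) X e g * Y g f.
Definition op_add {I : finType} (X Y : op I) : op I := fun e f => X e f + Y e f.
Definition op_scale {I : finType} (a : C) (X : op I) : op I := fun e f => a * X e f.
Definition op_zero {I : finType} : op I := fun _ _ => 0.
Definition op_adj {I : finType} (X : op I) : op I := fun e f => conjc (X f e).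
Definition op_tr {I : finType} (X : op I) : C := \sum_(e : I) X e e.
Definition op_diag {I : finType} (g : I -> C) : op I :=
  fun e f => if e == f then g e else 0.

Definition psd {I : finType} (X : op I) : Prop :=
  forall v : I -> C, 0 <= \sum_(e : I) \sum_(f : I) conjc (v e) * X e f * v f.

Definition is_state {I : finType} (rho : op I) : Prop :=
  psd rho /\ op_tr rho = 1.

Definition AB (d : nat) := ('I_d * 'I_d)%type.

Definition Lsys (d : nat) : op 'I_d := op_diag (fun n : 'I_d => (n : nat)%:R).

(* L_AB = L (x) 1 + 1 (x) L, diagonal with eigenvalue a + b on |a,b> *)
Definition LAB (d : nat) : op (AB d) :=
  op_diag (fun e : AB d => (e.1 + e.2)%N%:R).

(* Pi_c : projector onto the eigenvalue-c eigenspace of L_AB (zero if c is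
   not an eigenvalue). *)
Definition Pi (d : nat) (c : nat) : op (AB d) :=
  op_diag (fun e : AB d => if (e.1 + e.2 == c)%N then 1 else 0).

(* j-th mode X^(j) = sum_c Pi_(c+j) X Pi_c ; the eigenvalues of L_AB are
   0, ..., 2d-2, so summing over c < 2d covers all of them. *)
Definition mode {d : nat} (j : nat) (X : op (AB d)) : op (AB d) :=
  \big[@op_add _ / @op_zero _]_(c < (2 * d)%N)
     op_mul (op_mul (Pi d (c + j)%N) X) (Pi d c).

Definition in_modes {d : nat} (X : op (AB d)) (j : nat) : Prop :=
  mode j X <> @op_zero (AB d).

Definition incoherent {d : nat} (sigma : op 'I_d) : Prop :=
  op_mul sigma (Lsys d) = op_mul (Lsys d) sigma.

Definition trB {d : nat} (X : op (AB d)) : op 'I_d :=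
  fun a a' => \sum_(b : 'I_d) X (a, b) (a', b).
Definition trA {d : nat} (X : op (AB d)) : op 'I_d :=
  fun b b' => \sum_(a : 'I_d) X (a, b) (a, b').

Definition lin_map {I : finType} (E : op I -> op I) : Prop :=
  forall (a : C) (X Y : op I),
    E (op_add (op_scale a X) Y) = op_add (op_scale a (E X)) (E Y).

(* (id_k (x) E) applied to an operator on C^k (x) H *)
Definition ampl {I : finType} {k : nat} (E : op I -> op I)
  (X : op (('I_k * I)%type)) : op (('I_k * I)%type) :=
  fun e f => E (fun x y => X (e.1, x) (f.1, y)) e.2 f.2.

Definition completely_positive {I : finType} (E : op I -> op I) : Prop :=
  forall (k : nat) (X : op (('I_k * I)%type)), psd X -> psd (ampl E X).

Definition trace_preserving {I : finType} (E : op I -> op I) : Prop :=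
  forall X : op I, op_tr (E X) = op_tr X.

Definition cptp {I : finType} (E : op I -> op I) : Prop :=
  [/\ lin_map E, completely_positive E & trace_preserving E].

(* e^{-i L_AB x}, diagonal with entries exp(-i (a+b) x) *)
Definition Uevol (d : nat) (x : R) : op (AB d) :=
  op_diag (fun e : AB d =>
    let t := ((e.1 + e.2)%N%:R * x) in Complex (cos t) (- sin t)).

Definition covariant {d : nat} (E : op (AB d) -> op (AB d)) : Prop :=
  forall (x : R) (X : op (AB d)),
    E (op_mul (op_mul (Uevol d x) X) (op_adj (Uevol d x)))
    = op_mul (op_mul (Uevol d x) (E X)) (op_adj (Uevol d x)).

Definition allowed_op {d : nat} (E : op (AB d) -> op (AB d)) : Prop :=
  cptp E /\ covariant E.

End QDefs.
Arguments op R I : clear implicits.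

From HB Require Import structures.
From mathcomp Require Import all_boot all_order all_algebra.
From mathcomp Require Import boolp reals trigo.
From mathcomp Require Import complex.
From mathcomp Require Import lra zify.
Import Order.TTheory GRing.Theory Num.Theory.
Local Open Scope ring_scope.

Set Implicit Arguments.
Unset Strict Implicit.

(* Conjugation by e^{-i L_AB x} multiplies the (e, f) entry of an operator by
   e^{-i k x}, where the mode k of that entry is the difference of the
   L_AB-eigenvalues of e and f.  A linear covariant map therefore sends an
   operator supported on a single mode j to one supported on mode j: for an
   entry of mode k <> j pick x with e^{-i (k - j) x} = -1.  Cutting rho into
   the blocks Pi_c rho Pi_c', each on the single mode c - c', shows that E(rho)
   has no mode that rho lacks.  Being Hermitian, rho lacks the modes -j as well
   as j for 1 <= j <= d - 1, so E(rho) has no mode of absolute value in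
   [1, d - 1].  An off-diagonal entry <a| tr_B E(rho) |a'> sums entries of
   E(rho) of mode a - a', so it vanishes: both reduced states are diagonal,
   hence commute with L. *)

Section Operators.
Variables (R : realType) (I : finType).
Local Notation C := (R[i]).

Lemma op_ext (X Y : op R I) : (forall e f, X e f = Y e f) -> X = Y.
Proof. by move=> XY; apply/funext => e; apply/funext => f; exact: XY. Qed.

Lemma op_sum_entry n (F : 'I_n -> op R I) e f :
  (\big[op_add/op_zero]_(i < n) F i) e f = \sum_(i < n) F i e f.
Proof.
elim: n F => [|n IHn] F; first by rewrite !big_ord0.
by rewrite big_ord_recl [RHS]big_ord_recl /= -(IHn (fun i => F (lift ord0 i))).
Qed.

Lemma op_mul_diagl (h : I -> C) (X : op R I) e f :
  op_mul (op_diag h) X e f = h e * X e f.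
Proof.
rewrite /op_mul (bigD1 e) //= /op_diag eqxx big1 ?addr0 // => g.
by rewrite eq_sym => /negbTE ->; rewrite mul0r.
Qed.

Lemma op_mul_diagr (h : I -> C) (X : op R I) e f :
  op_mul X (op_diag h) e f = X e f * h f.
Proof.
rewrite /op_mul (bigD1 f) //= /op_diag eqxx big1 ?addr0 // => g.
by move=> /negbTE ->; rewrite mulr0.
Qed.

Lemma op_mul_adj_diagr (h : I -> C) (X : op R I) e f :
  op_mul X (op_adj (op_diag h)) e f = X e f * conjc (h f).
Proof.
rewrite /op_mul (bigD1 f) //= /op_adj /op_diag eqxx big1 ?addr0 // => g.
by rewrite eq_sym => /negbTE ->; rewrite conjc0 mulr0.
Qed.

Section LinearMaps.
Variable E : op R I -> op R I.
Hypothesis linE : lin_map E.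

Lemma lin_map0 : E op_zero = op_zero.
Proof.
have zeroE : op_add (op_scale (-1) op_zero) op_zero = op_zero :> op R I.
  by apply: op_ext => e f; rewrite /op_add /op_scale /op_zero mulr0 addr0.
have := linE (-1) op_zero op_zero; rewrite zeroE => E0.
apply: op_ext => e f; have := congr1 (fun Y => Y e f) E0.
by rewrite /op_add /op_scale mulN1r addNr.
Qed.

Lemma lin_mapZ a X : E (op_scale a X) = op_scale a (E X).
Proof.
have addX0 (Y : op R I) : op_add Y op_zero = Y.
  by apply: op_ext => e f; rewrite /op_add /op_zero addr0.
by have := linE a X op_zero; rewrite lin_map0 !addX0.
Qed.

Lemma lin_mapD X Y : E (op_add X Y) = op_add (E X) (E Y).
Proof.
have scale1 (Z : op R I) : op_scale 1 Z = Z.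
  by apply: op_ext => e f; rewrite /op_scale mul1r.
by have := linE 1 X Y; rewrite !scale1.
Qed.

Lemma lin_map_sum n (F : 'I_n -> op R I) :
  E (\big[op_add/op_zero]_(i < n) F i) = \big[op_add/op_zero]_(i < n) E (F i).
Proof.
elim: n F => [|n IHn] F; first by rewrite !big_ord0 lin_map0.
by rewrite !big_ord_recl lin_mapD IHn.
Qed.

End LinearMaps.

Definition basis_vec (i : I) : I -> C := fun e => if e == i then 1 else 0.

Definition pair_vec (i j : I) (c : C) : I -> C :=
  fun e => (if e == i then 1 else 0) + (if e == j then c else 0).

Lemma psd_form_basis_vec (X : op R I) i :
  \sum_e \sum_f conjc (basis_vec i e) * X e f * basis_vec i f = X i i.
Proof.
rewrite (bigD1 i) //= [X in _ + X]big1 ?addr0; last first.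
  move=> e /negbTE ei; apply: big1 => f _.
  by rewrite /basis_vec ei conjc0 !mul0r.
rewrite (bigD1 i) //= [X in _ + X]big1 ?addr0; last first.
  by move=> f /negbTE fi; rewrite /basis_vec fi mulr0.
by rewrite /basis_vec eqxx conjc1 mul1r mulr1.
Qed.

Lemma sum_pair_vec i j (c : C) (F : I -> C) : i != j ->
  \sum_e pair_vec i j c e * F e = F i + c * F j.
Proof.
move=> ij; rewrite /pair_vec (bigD1 i) //= (bigD1 j) 1?eq_sym //=.
rewrite !eqxx eq_sym (negbTE ij) big1 ?addr0 ?add0r ?mul1r //.
by move=> e /andP[/negbTE -> /negbTE ->]; rewrite addr0 mul0r.
Qed.

Lemma psd_form_pair_vec (X : op R I) i j (c : C) : i != j ->
  \sum_e \sum_f conjc (pair_vec i j c e) * X e f * pair_vec i j c f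
  = (X i i + c * X i j) + conjc c * (X j i + c * X j j).
Proof.
move=> ij.
have conj_vec e : conjc (pair_vec i j c e) = pair_vec i j (conjc c) e.
  by rewrite /pair_vec rmorphD /=; case: (e == i); case: (e == j);
     rewrite ?conjc1 ?conjc0.
under eq_bigr => e _.
  under eq_bigr => f _ do rewrite [_ * pair_vec _ _ _ f]mulrC.
  rewrite sum_pair_vec // mulrCA -mulrDr conj_vec.
  over.
by rewrite sum_pair_vec.
Qed.

(* The quadratic form is real on e_i, e_i + e_j and e_i + i e_j, which pins
   down X f e = conj (X e f). *)
Lemma psd_hermitian (X : op R I) : psd X -> forall e f, X f e = conjc (X e f).
Proof.
move=> Xpsd e f; have [<-|ef] := eqVneq e f.
  have := ger0_Im (Xpsd (basis_vec e)); rewrite psd_form_basis_vec.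
  by case: (X e e) => a b /= ->; rewrite oppr0.
have := ger0_Im (Xpsd (pair_vec e f 1)); rewrite psd_form_pair_vec //.
have := ger0_Im (Xpsd (pair_vec e f 'i)); rewrite psd_form_pair_vec //.
have := ger0_Im (Xpsd (basis_vec e)); rewrite psd_form_basis_vec.
have := ger0_Im (Xpsd (basis_vec f)); rewrite psd_form_basis_vec.
case: (X e e) (X e f) (X f e) (X f f) => [a1 b1] [a2 b2] [a3 b3] [a4 b4] /= *.
by apply/eqP; rewrite eq_complex /=; apply/andP; split; apply/eqP; lra.
Qed.

End Operators.

Section Phase.
Variable R : realType.

Definition expNi (t : R) : R[i] := Complex (cos t) (- sin t).

Lemma expNi_mulC a b : expNi a * conjc (expNi b) = expNi (a - b).
Proof.
rewrite /expNi /= cosB sinB opprK; apply/eqP; rewrite eq_complex /=.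
by apply/andP; split; apply/eqP; lra.
Qed.

Lemma expNi_neq0 t : expNi t != 0.
Proof.
apply/negP => /eqP [cos0 /eqP]; rewrite oppr_eq0 => /eqP sin0.
have := cos2Dsin2 t; rewrite cos0 sin0 expr0n addr0 => /eqP.
by rewrite eq_sym oner_eq0.
Qed.

Lemma expNiDpi t : expNi (t + pi) = - expNi t.
Proof. by rewrite /expNi cosDpi sinDpi. Qed.

End Phase.

Section Modes.
Variables (R : realType) (d : nat).
Local Notation lev e := (e.1 + e.2)%N.
Local Notation lev_diff e f := ((lev e)%:Z - (lev f)%:Z).

Lemma lev_lt (e : AB d) : (lev e < 2 * d)%N.
Proof. by have := ltn_ord e.1; have := ltn_ord e.2; lia. Qed.

Definition mode_free (j : int) (X : op R (AB d)) : Prop :=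
  forall e f : AB d, lev_diff e f = j -> X e f = 0.

Definition single_mode (j : int) (X : op R (AB d)) : Prop :=
  forall e f : AB d, lev_diff e f != j -> X e f = 0.

Definition block (c c' : nat) (X : op R (AB d)) : op R (AB d) :=
  op_mul (op_mul (Pi d c) X) (Pi d c').

Lemma block_entry c c' (X : op R (AB d)) (e f : AB d) :
  block c c' X e f = if (lev e == c) && (lev f == c') then X e f else 0.
Proof.
rewrite /block /Pi op_mul_diagr op_mul_diagl.
by case: (lev e == c); case: (lev f == c'); rewrite ?mul1r ?mulr1 ?mul0r ?mulr0.
Qed.

Lemma block_single_mode c c' (X : op R (AB d)) :
  single_mode (c%:Z - c'%:Z) (block c c' X).
Proof.
move=> e f ef; rewrite block_entry.
by case: eqP => [ec|//]; case: eqP => [fc'|//]; move: ef; rewrite ec fc' eqxx.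
Qed.

Lemma sum_blocks (X : op R (AB d)) :
  X = \big[op_add/op_zero]_(c < 2 * d)
        \big[op_add/op_zero]_(c' < 2 * d) block c c' X.
Proof.
apply: op_ext => e f; rewrite op_sum_entry.
under eq_bigr do rewrite op_sum_entry.
under eq_bigr do under eq_bigr do rewrite block_entry.
rewrite pair_bigA -big_mkcond.
rewrite (big_pred1 (Ordinal (lev_lt e), Ordinal (lev_lt f))) // => -[c c'] /=.
by rewrite xpair_eqE -!val_eqE /= (eq_sym (lev e)) (eq_sym (lev f)).
Qed.

Lemma mode_entry (j : nat) (X : op R (AB d)) (e f : AB d) :
  lev e = (lev f + j)%N -> mode j X e f = X e f.
Proof.
move=> ef; rewrite /mode op_sum_entry.
under eq_bigr do rewrite -/(block _ _ X) block_entry.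
rewrite -big_mkcond (big_pred1 (Ordinal (lev_lt f))) // => c.
by rewrite ef eqn_add2r andbb /= -val_eqE eq_sym.
Qed.

Lemma mode_free_not_in_modes (j : nat) (X : op R (AB d)) :
  ~ in_modes X j -> mode_free j X.
Proof.
move=> /contrapT modeX0 e f ef.
by rewrite -(@mode_entry j) ?modeX0 //; lia.
Qed.

Lemma psd_mode_free_abs (j : int) (X : op R (AB d)) :
  psd X -> mode_free `|j|%N X -> mode_free j X.
Proof.
move=> Xpsd Xfree e f ef; have [j_ge0|j_lt0] := boolP (0 <= j)%R.
  by apply: Xfree; lia.
by rewrite (psd_hermitian Xpsd f e) (Xfree f e) ?conjc0 //; lia.
Qed.

Lemma UevolE (x : R) :
  Uevol d x = op_diag (fun e : AB d => expNi ((lev e)%:R * x)).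
Proof. by []. Qed.

Lemma conj_Uevol_entry x (X : op R (AB d)) (e f : AB d) :
  op_mul (op_mul (Uevol d x) X) (op_adj (Uevol d x)) e f
  = expNi ((lev_diff e f)%:~R * x) * X e f.
Proof.
by rewrite UevolE op_mul_adj_diagr op_mul_diagl mulrAC expNi_mulC intrB -mulrBl.
Qed.

Lemma covariant_single_mode (E : op R (AB d) -> op R (AB d)) j X :
  lin_map E -> covariant E -> single_mode j X -> single_mode j (E X).
Proof.
move=> linE covE Xj e f ef.
pose x : R := pi / (lev_diff e f - j)%:~R.
have conjX : op_mul (op_mul (Uevol d x) X) (op_adj (Uevol d x))
             = op_scale (expNi (j%:~R * x)) X.
  apply: op_ext => e' f'; rewrite conj_Uevol_entry /op_scale.
  by have [->//|/Xj ->] := eqVneq (lev_diff e' f') j; rewrite !mulr0.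
have shift : (lev_diff e f)%:~R * x = j%:~R * x + pi.
  rewrite -[lev_diff e f](subrK j) intrD mulrDl addrC; congr (_ + _).
  by rewrite mulrC divfK // intr_eq0 subr_eq0.
have := congr1 (fun Y => Y e f) (covE x X).
rewrite conjX lin_mapZ // conj_Uevol_entry /op_scale shift expNiDpi mulNr.
move=> /eqP; rewrite eq_sym eqNr mulf_eq0 (negbTE (expNi_neq0 _)).
by move/eqP.
Qed.

Lemma covariant_mode_free (E : op R (AB d) -> op R (AB d)) j X :
  lin_map E -> covariant E -> mode_free j X -> mode_free j (E X).
Proof.
move=> linE covE Xfree e f ef.
rewrite (sum_blocks X) lin_map_sum // op_sum_entry big1 // => c _.
rewrite lin_map_sum // op_sum_entry big1 // => c' _.
have [cc'|cc'] := eqVneq (c%:Z - c'%:Z) j.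
  suff -> : block c c' X = op_zero by rewrite lin_map0.
  apply: op_ext => e' f'; rewrite block_entry.
  by case: eqP => [ec|//]; case: eqP => [fc'|//]; apply: Xfree; rewrite ec fc'.
apply: (covariant_single_mode linE covE (@block_single_mode c c' X)).
by rewrite ef eq_sym.
Qed.

Definition gap_free (X : op R (AB d)) : Prop :=
  forall j : int, (1 <= `|j| <= d.-1)%N -> mode_free j X.

Lemma trB_offdiag0 (X : op R (AB d)) (a a' : 'I_d) :
  gap_free X -> a != a' -> trB X a a' = 0.
Proof.
move=> Xgap; rewrite -val_eqE /= => aa'; rewrite /trB big1 // => b _.
have gap_a : (1 <= `|a%:Z - a'%:Z| <= d.-1)%N.
  by have := ltn_ord a; have := ltn_ord a'; lia.
by apply: (Xgap _ gap_a) => /=; lia.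
Qed.

Lemma trA_offdiag0 (X : op R (AB d)) (b b' : 'I_d) :
  gap_free X -> b != b' -> trA X b b' = 0.
Proof.
move=> Xgap; rewrite -val_eqE /= => bb'; rewrite /trA big1 // => a _.
have gap_b : (1 <= `|b%:Z - b'%:Z| <= d.-1)%N.
  by have := ltn_ord b; have := ltn_ord b'; lia.
by apply: (Xgap _ gap_b) => /=; lia.
Qed.

End Modes.

Lemma incoherent_offdiag0 (R : realType) d (s : op R 'I_d) :
  (forall a a', a != a' -> s a a' = 0) -> incoherent s.
Proof.
move=> s_off; apply: op_ext => a a'; rewrite /Lsys op_mul_diagr op_mul_diagl.
by have [->|/s_off ->] := eqVneq a a'; [rewrite mulrC | rewrite mulr0 mul0r].
Qed.

Theorem mainTheorem6 (R : realType) (d : nat) (rho : op R (AB d)) :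
  is_state rho ->
  (forall j : nat, (1 <= j <= d.-1)%N -> ~ in_modes rho j) ->
  forall E : op R (AB d) -> op R (AB d),
    allowed_op E ->
    incoherent (trB (E rho)) /\ incoherent (trA (E rho)).
Proof.
move=> [rho_psd _] rho_gap E [[linE _ _] covE].
have Erho_gap : gap_free (E rho).
  move=> j j_gap; apply: covariant_mode_free => //.
  exact: psd_mode_free_abs rho_psd (mode_free_not_in_modes (rho_gap _ j_gap)).
by split; apply: incoherent_offdiag0 => a a';
  [exact: trB_offdiag0 | exact: trA_offdiag0].
Qed.
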